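(* With $\bar{\sigma}_g^f,\bar{\sigma}_g^o,\bar{\sigma}_c^x\in(0,1)$, $\alpha\ge0$, $U_o\in\mathbb{R}^{n_x\times n_x}$ and \[ A_\delta=\begin{bmatrix}\bar{\sigma}_g^f & \alpha\\ \bar{\sigma}_g^o\bar{\sigma}_g^f & \alpha\bar{\sigma}_g^o+\tfrac14\bar{\sigma}_c^x\|U_o\|\end{bmatrix}, \] the matrix $A_\delta$ is Schur stable ($\rho(A_\delta)<1$) if \[ -1+\bar{\sigma}_g^f+\alpha\bar{\sigma}_g^o+\tfrac14\bar{\sigma}_c^x\|U_o\|<\tfrac14\bar{\sigma}_g^f\bar{\sigma}_c^x\|U_o\|<1. \]
   Context: $\|U_o\|$ is the induced 2-norm, $\rho$ the spectral radius. (In the paper these quantities arise from an LSTM network: $\bar{\sigma}_g^\star=\sigma_g(\|[W_\star u_{\max}\ U_\star\ b_\star]\|_\infty)$, $\bar{\sigma}_c^c=\tanh(\|[W_c u_{\max}\ U_c\ b_c]\|_\infty)$, $\bar{\sigma}_c^x=\tanh(\bar{\sigma}_g^i\bar{\sigma}_c^c/(1-\bar{\sigma}_g^f))$, $\alpha=\tfrac14\|U_f\|\frac{\bar{\sigma}_g^i\bar{\sigma}_c^c}{1-\bar{\sigma}_g^f}+\bar{\sigma}_g^i\|U_c\|+\tfrac14\|U_i\|\bar{\sigma}_c^c$.) *)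

From HB Require Import structures.
From mathcomp Require Import all_boot all_order all_algebra.
From mathcomp Require Import complex.
From mathcomp Require Import all_classical all_reals.
Set Implicit Arguments. Unset Strict Implicit. Unset Printing Implicit Defensive.
Import Order.TTheory GRing.Theory Num.Theory.
Local Open Scope ring_scope.
Local Open Scope classical_set_scope.

Definition norm2 (R : realType) (n : nat) (x : 'cV[R]_n) : R :=
  Num.sqrt (\sum_(i < n) x i 0 ^+ 2).

Definition induced_norm2 (R : realType) (n : nat) (U : 'M[R]_n) : R :=
  sup [set norm2 (U *m x) / norm2 x | x in [set x : 'cV[R]_n | x != 0]].

Definition spectral_radius (R : realType) (n : nat) (A : 'M[R]_n) : R :=
  sup [set ComplexField.Normc.normc l | l in
        [set l : R[i] | eigenvalue (map_mx (fun a : R => a%:C%C) A) l]].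

Definition A_delta (R : realType) (sgf sgo scx alpha nUo : R) : 'M[R]_2 :=
  \matrix_(i < 2, j < 2)
    if (i == 0 :> nat) then (if (j == 0 :> nat) then sgf else alpha)
    else (if (j == 0 :> nat) then sgo * sgf
          else alpha * sgo + 4^-1 * scx * nUo).

From mathcomp Require Import all_boot all_order all_algebra.
From mathcomp Require Import complex.
From mathcomp Require Import all_classical all_reals.
From mathcomp Require Import ring lra.
Import Order.TTheory GRing.Theory Num.Theory.
Local Open Scope ring_scope.

(* The eigenvalues of a real 2x2 matrix are the roots of
   z^2 - tr(A) z + det(A), and for A_delta the trace is
   sgf + alpha sgo + c and the determinant is sgf c, with c = scx |Uo| / 4
   (the alpha terms cancel).  By the Jury (Schur-Cohn) criterion for
   quadratics, both roots lie in the open unit disk as soon as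
   |det| < 1 and |tr| < 1 + det, and these are exactly the two hypotheses.
   A root z = a + ib either is real, and then p(1) > 0, p(-1) > 0 and
   |T| < 2 confine it to (-1, 1), or has a = T/2, and then
   |z|^2 = z conj(z) = det. *)

Lemma det_mx22 (R : comPzRingType) (A : 'M[R]_2) :
  \det A = A 0 0 * A 1 1 - A 0 1 * A 1 0.
Proof.
rewrite (expand_det_row _ 0) !big_ord_recl big_ord0 addr0 /cofactor !det_mx11 !mxE /=.
rewrite expr0 expr1 !mul1r mulN1r mulrN.
by congr (A _ _ * A _ _ - A _ _ * A _ _); apply: val_inj.
Qed.

Lemma mxtrace_mx22 (R : pzRingType) (A : 'M[R]_2) : \tr A = A 0 0 + A 1 1.
Proof.
rewrite /mxtrace !big_ord_recl big_ord0 addr0.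
by congr (A _ _ + A _ _); apply: val_inj.
Qed.

Lemma char_poly_mx22 (R : comNzRingType) (A : 'M[R]_2) :
  char_poly A = 'X^2 - (\tr A)%:P * 'X + (\det A)%:P.
Proof.
apply/polyP => i; rewrite coefD coefB coefC coefXn coefCM coefX.
have := char_poly_monic A; rewrite monicE lead_coefE size_char_poly /= => /eqP c2.
case: i => [|[|[|i]]] /=.
- by rewrite char_poly_det expr2 mulrNN !mul1r; ring.
- by rewrite (char_poly_trace A) //; ring.
- by rewrite c2; ring.
- by rewrite nth_default ?size_char_poly //; ring.
Qed.

Lemma eigenvalue_mx22 (F : fieldType) (A : 'M[F]_2) a :
  eigenvalue A a = (a ^+ 2 - \tr A * a + \det A == 0).
Proof. by rewrite eigenvalue_root_char char_poly_mx22 /root !hornerE. Qed.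

Lemma normc_lt1_quadratic_root (R : rcfType) (T D : R) (z : R[i]) :
  `|D| < 1 -> `|T| < 1 + D -> z ^+ 2 - T%:C%C * z + D%:C%C = 0 ->
  ComplexField.Normc.normc z < 1.
Proof.
case: z => a b /ltr_normlP[D_gtN1 D_lt1] /ltr_normlP[T_gtN T_lt].
rewrite expr2 => -[re_eq im_eq].
rewrite -sqrtr1 ltr_sqrt ?ltr01 //.
have : b * (2 * a - T) = 0 by rewrite -im_eq; ring.
move/eqP; rewrite mulf_eq0 => /orP[/eqP b0|/eqP T_2a].
  subst b.
  (* p(a) - p(1) = (a - 1) (a + 1 - T) and p(a) - p(-1) = (a + 1) (a - 1 - T) *)
  have a_lt1 : a < 1.
    rewrite ltNge; apply/negP => a_ge1.
    have : 0 <= (a - 1) * (a + 1 - T) by apply: mulr_ge0; lra.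
    nra.
  have a_gtN1 : -1 < a.
    rewrite ltNge; apply/negP => a_leN1.
    have : 0 <= (- 1 - a) * (1 + T - a) by apply: mulr_ge0; lra.
    nra.
  rewrite expr0n addr0; nra.
nra.
Qed.

Lemma sup_ge0 (R : realType) (E : set R) : (forall x, E x -> 0 <= x) -> 0 <= sup E.
Proof.
move=> E_ge0; have [supE|/sup_out->] := pselect (has_sup E); last by [].
have [[x Ex] _] := supE.
exact: le_trans (E_ge0 _ Ex) (sup_upper_bound supE Ex).
Qed.

Lemma induced_norm2_ge0 (R : realType) (n : nat) (U : 'M[R]_n) :
  0 <= induced_norm2 U.
Proof. by apply: sup_ge0 => _ [x _ <-]; rewrite divr_ge0 ?sqrtr_ge0. Qed.

Lemma spectral_radius_lt (R : realType) (n : nat) (A : 'M[R]_n) (r : R) :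
  0 < r ->
  (forall l, eigenvalue (map_mx (fun a : R => a%:C%C) A) l ->
     ComplexField.Normc.normc l < r) ->
  spectral_radius A < r.
Proof.
move=> r_gt0 eig_lt; rewrite /spectral_radius.
(* The spectrum is the finite set of roots of the split characteristic
   polynomial, so the supremum is bounded by a finite maximum. *)
set Ac := map_mx _ A; set S := (X in sup X).
have [rs char_rs] := closed_field_poly_normal (char_poly Ac).
rewrite (monicP (char_poly_monic Ac)) scale1r in char_rs.
have eig_rs l : eigenvalue Ac l = (l \in rs).
  by rewrite eigenvalue_root_char char_rs root_prod_XsubC.
have [->|/set0P neS] := eqVneq S set0; first by rewrite sup0.
apply: (@le_lt_trans _ _ (\big[Num.max/0]_(l <- rs) ComplexField.Normc.normc l)).
  by apply: ge_sup => // _ [l El <-]; apply: le_bigmax_seq => //; rewrite -eig_rs.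
rewrite big_seq; elim/big_ind: _ => // [x y x_lt y_lt | l l_rs].
  by rewrite gt_max x_lt.
by apply: eig_lt; rewrite eig_rs.
Qed.

Theorem proposition2 (R : realType) (nx : nat)
  (sgf sgo scx alpha : R) (Uo : 'M[R]_nx) :
  0 < sgf < 1 -> 0 < sgo < 1 -> 0 < scx < 1 -> 0 <= alpha ->
  -1 + sgf + alpha * sgo + 4^-1 * scx * induced_norm2 Uo
    < 4^-1 * sgf * scx * induced_norm2 Uo ->
  4^-1 * sgf * scx * induced_norm2 Uo < 1 ->
  spectral_radius (A_delta sgf sgo scx alpha (induced_norm2 Uo)) < 1.
Proof.
move=> /andP[sgf_gt0 _] /andP[sgo_gt0 _] /andP[scx_gt0 _] alpha_ge0.
have := @induced_norm2_ge0 _ _ Uo; set nU := induced_norm2 Uo => nU_ge0 T_lt D_lt1.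
set A := A_delta _ _ _ _ _.
have trA : \tr A = sgf + alpha * sgo + 4^-1 * scx * nU.
  by rewrite mxtrace_mx22 !mxE /=; ring.
have detA : \det A = sgf * (4^-1 * scx * nU).
  by rewrite det_mx22 !mxE /=; ring.
have c_ge0 : 0 <= 4^-1 * scx * nU.
  by apply: mulr_ge0 => //; apply: mulr_ge0; [lra | exact: ltW].
have alpha_sgo_ge0 : 0 <= alpha * sgo := mulr_ge0 alpha_ge0 (ltW sgo_gt0).
have D_ge0 : 0 <= \det A by rewrite detA (mulr_ge0 (ltW sgf_gt0)).
apply: spectral_radius_lt; rewrite ?ltr01 // => l.
rewrite eigenvalue_mx22 (trace_map_mx (real_complex R)).
rewrite (det_map_mx (real_complex R)) => /eqP.
apply: normc_lt1_quadratic_root.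
  by rewrite ger0_norm // detA; lra.
by rewrite trA detA ger0_norm; lra.
Qed.
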